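(* Let $k\ge2$, $\sigma_i=\frac{i(k-i)}2$ for $i=0,\dots,k$, and consider the system for $(b_2,\dots,b_k)$: $$\dot b_i=(b_i+\sigma_{i-1})(b_{i-1}-2b_i+b_{i+1}),\qquad i=2,\dots,k,$$ with the convention $b_1\equiv b_{k+1}\equiv0$. For all $\eta\in(0,\frac15]$ and $A\ge0$, the compact set $K=\prod_{i=2}^k[-\sigma_{i-1}+\eta,A]$ is stable (forward invariant) under the flow of this system. In particular, any solution whose initial data lies in $K$ is global (for forward times). *)

From Stdlib Require Import Reals Lra Lia.
From Coquelicot Require Import Coquelicot.
Open Scope R_scope.

Definition sigma (k i : nat) : R := INR i * (INR k - INR i) / 2.

(* A state is b : nat -> R, only the indices 2..k are meaningful.
   Extension with the convention b_1 = b_{k+1} = 0 (and 0 outside 2..k). *)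
Definition bext (k : nat) (b : nat -> R) (i : nat) : R :=
  if andb (Nat.leb 2 i) (Nat.leb i k) then b i else 0.

Definition rhs (k : nat) (b : nat -> R) (i : nat) : R :=
  (b i + sigma k (i - 1)) * (bext k b (i - 1) - 2 * b i + bext k b (i + 1)).

Definition inK (k : nat) (eta A : R) (b : nat -> R) : Prop :=
  forall i : nat, (2 <= i <= k)%nat -> - sigma k (i - 1) + eta <= b i <= A.

Definition is_solution (k : nat) (T : Rbar) (b : R -> nat -> R) : Prop :=
  (forall i : nat, (2 <= i <= k)%nat ->
     filterlim (fun s => b s i) (at_right 0) (locally (b 0 i))) /\
  (forall t : R, 0 < t -> Rbar_lt t T ->
     forall i : nat, (2 <= i <= k)%nat ->
       is_derive (fun s => b s i) t (rhs k (b t) i)).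

(* The vector field points weakly into K on every face.  On an upper face [b_i = A] the factor
   [b_i + sigma_(i-1)] is nonnegative and the discrete Laplacian is nonpositive, since no
   neighbour exceeds [A].  On a lower face the factor equals [eta > 0], and since [sigma] has
   second difference [-1] the Laplacian is at least [1 - 2 eta >= 0]; this only needs
   [eta <= 1/2].  A barrier argument turns weak inwardness into invariance: boxes enlarged by a
   margin growing linearly in time can only be left through a face that the trajectory crosses
   outwards with positive speed, which is impossible.
   For global existence, clamp the state into K: the clamped field is bounded and globally
   Lipschitz, so Picard iteration gives a global solution.  That solution stays in K by the
   invariance argument, and on K the clamped field is the original one. *)

From Pilot Require Import Defs.
From Stdlib Require Import Reals Lra Lia Classical.
From Coquelicot Require Import Coquelicot.
(* [Reals] exports its own [sigma]; restore the one of [Defs]. *)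
Import Defs.
Open Scope R_scope.

Lemma le_of_forall_lt_add (a b c : R) :
  0 < c -> (forall e, 0 < e < c -> a < b + e) -> a <= b.
Proof.
  intros Hc H. apply Rnot_lt_le; intros Hba.
  assert (Hm : 0 < Rmin (a - b) c) by (apply Rmin_glb_lt; lra).
  pose proof (Rmin_l (a - b) c). pose proof (Rmin_r (a - b) c).
  specialize (H (Rmin (a - b) c / 2)). lra.
Qed.

Lemma real_induction (P : R -> Prop) (a b : R) :
  a <= b ->
  (forall s, a <= s <= b -> (forall r, a <= r < s -> P r) -> P s) ->
  (forall s, a <= s < b -> (forall r, a <= r <= s -> P r) ->
     exists del, 0 < del /\ forall r, s < r < s + del -> P r) ->
  forall s, a <= s <= b -> P s.
Proof.
  intros Hab Hclosed Hopen.
  set (E := fun s => a <= s <= b /\ forall r, a <= r <= s -> P r).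
  assert (Ea : E a).
  { split; [lra|]. intros r Hr. replace r with a by lra.
    apply Hclosed; [lra|]. intros; lra. }
  destruct (completeness E) as [tau [Hub Hlub]].
  { exists b. intros s Hs. apply Hs. }
  { exists a. exact Ea. }
  assert (Hatau : a <= tau) by (apply Hub, Ea).
  assert (Htaub : tau <= b) by (apply Hlub; intros s Hs; apply Hs).
  assert (Hbelow : forall r, a <= r < tau -> P r).
  { intros r Hr. apply NNPP; intros HnP.
    enough (tau <= r) by lra.
    apply Hlub. intros s [_ Hs]. apply Rnot_lt_le; intros Hrs. apply HnP, Hs; lra. }
  assert (Etau : E tau).
  { split; [lra|]. intros r Hr. destruct (Rle_lt_or_eq_dec r tau (proj2 Hr)) as [Hlt| ->].
    - apply Hbelow; lra.
    - apply Hclosed; [lra|exact Hbelow]. }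
  assert (Htau : tau = b).
  { destruct (Rle_lt_or_eq_dec tau b Htaub) as [Hlt|]; [exfalso|assumption].
    destruct (Hopen tau ltac:(lra) (proj2 Etau)) as [del [Hdel Hafter]].
    assert (Hr' : tau < Rmin (tau + del / 2) b) by (apply Rmin_glb_lt; lra).
    pose proof (Rmin_l (tau + del / 2) b). pose proof (Rmin_r (tau + del / 2) b).
    set (r' := Rmin (tau + del / 2) b) in *.
    enough (HE : E r') by (specialize (Hub r' HE); lra).
    split; [lra|]. intros r Hr. destruct (Rle_lt_dec r tau).
    - apply Etau; lra.
    - apply Hafter; lra. }
  subst tau. apply Etau.
Qed.

Lemma filter_forall_bounded {T : Type} (F : (T -> Prop) -> Prop) {FF : Filter F}
  (J : nat -> Prop) (N : nat) (P : nat -> T -> Prop) :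
  (forall j, J j -> (j <= N)%nat) -> (forall j, J j -> F (P j)) ->
  F (fun x => forall j, J j -> P j x).
Proof.
  intros HN HP.
  assert (Hlt : forall n, F (fun x => forall j, (j < n)%nat -> J j -> P j x)).
  { induction n as [|n IH].
    - apply filter_forall. intros x j Hj; lia.
    - apply (filter_imp (fun x => (forall j, (j < n)%nat -> J j -> P j x) /\ (J n -> P n x))).
      + intros x [Hx Hn] j Hj HIj. destruct (Nat.eq_dec j n) as [-> |]; auto.
        apply Hx; auto; lia.
      + apply filter_and; [exact IH|].
        destruct (classic (J n)) as [HIn|HIn].
        * apply (filter_imp (P n)); auto.
        * apply filter_forall. tauto. }
  apply (filter_imp _ _) with (2 := Hlt (S N)).
  intros x Hx j Hj. apply Hx; [specialize (HN j Hj); lia|exact Hj].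
Qed.

Lemma in_interval_of_left_continuous (f : R -> R) (a t c1 c2 : R) :
  continuous f t -> a < t -> (forall r, a < r < t -> c1 <= f r <= c2) -> c1 <= f t <= c2.
Proof.
  intros Hf Hat Hr.
  apply (closed_filterlim_loc (F := at_left t) f (fun u => c1 <= u <= c2)).
  - exact (filterlim_filter_le_1 f (filter_le_within (F := locally t) _) Hf).
  - assert (Hd : 0 < t - a) by lra.
    exists (mkposreal _ Hd). intros y Hy Hyt. apply Hr.
    change (Rabs (y - t) < t - a) in Hy. apply Rabs_def2 in Hy. lra.
  - apply closed_and; [apply closed_ge|apply closed_le].
Qed.

Lemma pos_of_deriv_pos (h : R -> R) (a t d : R) :
  is_derive h t d -> 0 < d -> a < t -> (forall r, a < r < t -> 0 < h r) -> 0 < h t.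
Proof.
  intros Hd Hpos Hat Hr. apply is_derive_Reals in Hd.
  destruct (Hd (d / 2) ltac:(lra)) as [del Hdel].
  set (m := Rmin del (t - a)).
  assert (Hm : 0 < m) by (apply Rmin_glb_lt; [apply cond_pos|lra]).
  pose proof (Rmin_l del (t - a)). pose proof (Rmin_r del (t - a)).
  set (hh := - m / 2).
  assert (Hhh : hh < 0) by (unfold hh; lra).
  assert (Habs : Rabs hh < del) by (rewrite Rabs_left by lra; unfold hh, m in *; lra).
  specialize (Hdel hh ltac:(lra) Habs). apply Rabs_def2 in Hdel.
  assert (Hq : 0 < (h (t + hh) - h t) / hh) by lra.
  assert (Hdrop : h (t + hh) - h t = (h (t + hh) - h t) / hh * hh) by (field; lra).
  specialize (Hr (t + hh) ltac:(unfold hh, m in *; lra)).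
  nra.
Qed.

Lemma is_derive_affine_comb (f : R -> R) (t df a b c : R) :
  is_derive f t df -> is_derive (fun r => a * f r + b * r + c) t (a * df + b).
Proof.
  intros Hf. auto_derive.
  - exists df; exact Hf.
  - change (Derive (fun x => f x) t) with (Derive f t).
    rewrite (is_derive_unique f t df Hf). ring.
Qed.

Definition in_box (J : nat -> Prop) (lo hi : nat -> R) (d : R) (y : nat -> R) : Prop :=
  forall j, J j -> lo j - d <= y j <= hi j + d.

Definition in_open_box (J : nat -> Prop) (lo hi : nat -> R) (d : R) (y : nat -> R) : Prop :=
  forall j, J j -> lo j - d < y j < hi j + d.

Section BoxInvariance.

Variables (J : nat -> Prop) (N : nat) (lo hi : nat -> R).
Variables (V : (nat -> R) -> nat -> R) (d0 : R) (T : Rbar) (x : R -> nat -> R).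

Hypothesis J_bounded : forall j, J j -> (j <= N)%nat.
Hypothesis d0_pos : 0 < d0.
Hypothesis V_inward : forall d y i, 0 <= d < d0 -> in_box J lo hi d y -> J i ->
  (y i = hi i + d -> V y i <= 0) /\ (y i = lo i - d -> 0 <= V y i).
Hypothesis x_right_continuous_0 : forall i, J i ->
  filterlim (fun s => x s i) (at_right 0) (locally (x 0 i)).
Hypothesis x_derive : forall t, 0 < t -> Rbar_lt t T -> forall i, J i ->
  is_derive (fun s => x s i) t (V (x t) i).
Hypothesis x0_in_box : in_box J lo hi 0 (x 0).

Lemma x_continuous (t : R) (i : nat) : 0 < t -> Rbar_lt t T -> J i -> continuous (fun s => x s i) t.
Proof.
  intros Ht HtT Hi. apply (ex_derive_continuous (K := R_AbsRing) (V := R_NormedModule)).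
  exists (V (x t) i). exact (x_derive t Ht HtT i Hi).
Qed.

Lemma x_right_continuous (t : R) (i : nat) : 0 <= t -> Rbar_lt t T -> J i ->
  filterlim (fun s => x s i) (at_right t) (locally (x t i)).
Proof.
  intros Ht HtT Hi. destruct (Req_dec t 0) as [-> |Ht0].
  - exact (x_right_continuous_0 i Hi).
  - apply (filterlim_filter_le_1 _ (filter_le_within (F := locally t) _)).
    apply x_continuous; auto; lra.
Qed.

Lemma margin_box_closed_step (eps t0 s : R) : 0 < eps -> eps * (1 + t0) < d0 ->
  Rbar_lt t0 T -> 0 <= s <= t0 ->
  (forall r, 0 <= r < s -> in_open_box J lo hi (eps * (1 + r)) (x r)) ->
  in_open_box J lo hi (eps * (1 + s)) (x s).
Proof.
  intros Heps Hd0 HT Hs Hbefore.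
  destruct (Req_dec s 0) as [-> |Hs0].
  { intros j Hj. destruct (x0_in_box j Hj). lra. }
  assert (HsT : Rbar_lt s T) by (apply Rbar_le_lt_trans with t0; [exact (proj2 Hs)|exact HT]).
  set (e := eps * (1 + s)).
  assert (He : 0 <= e < d0) by (unfold e; nra).
  assert (Hbox : in_box J lo hi e (x s)).
  { intros j Hj.
    apply (in_interval_of_left_continuous (fun r => x r j) 0); [apply x_continuous; auto; lra|lra|].
    intros r Hr. destruct (Hbefore r ltac:(lra) j Hj). unfold e. nra. }
  intros j Hj. destruct (V_inward e (x s) j He Hbox Hj) as [Hhi Hlo].
  destruct (Hbox j Hj) as [Hl Hh]. split.
  - destruct Hl as [Hl|Hl]; [exact Hl|exfalso].
    specialize (Hlo (eq_sym Hl)).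
    assert (Hpos : 0 < 1 * x s j + eps * s + (eps - lo j)).
    { apply (pos_of_deriv_pos (fun r => 1 * x r j + eps * r + (eps - lo j)) 0 s
               (1 * V (x s) j + eps)); [|lra|lra|].
      - apply is_derive_affine_comb, x_derive; auto; lra.
      - intros r Hr. destruct (Hbefore r ltac:(lra) j Hj). lra. }
    unfold e in Hl. lra.
  - destruct Hh as [Hh|Hh]; [exact Hh|exfalso].
    specialize (Hhi Hh).
    assert (Hpos : 0 < -1 * x s j + eps * s + (hi j + eps)).
    { apply (pos_of_deriv_pos (fun r => -1 * x r j + eps * r + (hi j + eps)) 0 s
               (-1 * V (x s) j + eps)); [|lra|lra|].
      - apply is_derive_affine_comb, x_derive; auto; lra.
      - intros r Hr. destruct (Hbefore r ltac:(lra) j Hj). lra. }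
    unfold e in Hh. lra.
Qed.

Lemma margin_box_open_step (eps t0 s : R) : 0 < eps -> Rbar_lt t0 T -> 0 <= s < t0 ->
  in_open_box J lo hi (eps * (1 + s)) (x s) ->
  exists del, 0 < del /\ forall r, s < r < s + del -> in_open_box J lo hi (eps * (1 + r)) (x r).
Proof.
  intros Heps HT Hs Hin.
  assert (HsT : Rbar_lt s T) by (apply Rbar_le_lt_trans with t0; [change (s <= t0); lra|exact HT]).
  assert (Hev : at_right s (fun r => forall j, J j ->
                  lo j - eps * (1 + s) < x r j < hi j + eps * (1 + s))).
  { apply (filter_forall_bounded _ J N); [exact J_bounded|]. intros j Hj.
    apply (x_right_continuous s j ltac:(lra) HsT Hj
             (fun u => lo j - eps * (1 + s) < u < hi j + eps * (1 + s))).
    apply open_and; [apply open_gt|apply open_lt|exact (Hin j Hj)]. }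
  destruct Hev as [del Hdel]. exists del. split; [apply cond_pos|].
  intros r Hr j Hj.
  assert (Hball : ball s del r) by (change (Rabs (r - s) < del); rewrite Rabs_pos_eq; lra).
  destruct (Hdel r Hball ltac:(lra) j Hj). nra.
Qed.

Lemma margin_box_invariant (eps t0 : R) :
  0 < eps -> eps * (1 + t0) < d0 -> 0 <= t0 -> Rbar_lt t0 T ->
  in_open_box J lo hi (eps * (1 + t0)) (x t0).
Proof.
  intros Heps Hd0 Ht0 HT.
  apply (real_induction (fun s => in_open_box J lo hi (eps * (1 + s)) (x s)) 0 t0); [lra| | |lra].
  - intros s Hs Hbefore. apply (margin_box_closed_step eps t0); auto.
  - intros s Hs Hupto. apply (margin_box_open_step eps t0); auto. apply Hupto; lra.
Qed.

Theorem box_invariant (t : R) : 0 <= t -> Rbar_lt t T -> in_box J lo hi 0 (x t).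
Proof.
  intros Ht HT j Hj.
  assert (Hmargin : forall e, 0 < e < d0 -> lo j - e < x t j < hi j + e).
  { intros e He.
    assert (Heps : 0 < e / (1 + t)) by (apply Rdiv_lt_0_compat; lra).
    assert (E : e / (1 + t) * (1 + t) = e) by (field; lra).
    pose proof (margin_box_invariant (e / (1 + t)) t Heps ltac:(lra) Ht HT j Hj). lra. }
  split.
  - enough (lo j <= x t j + 0) by lra.
    apply (le_of_forall_lt_add _ _ d0 d0_pos). intros e He. specialize (Hmargin e He). lra.
  - enough (x t j <= hi j + 0) by lra.
    apply (le_of_forall_lt_add _ _ d0 d0_pos). intros e He. specialize (Hmargin e He). lra.
Qed.

End BoxInvariance.

Lemma lipschitz_continuous (f : R -> R) (C : R) :
  (forall a b, Rabs (f a - f b) <= C * Rabs (a - b)) -> forall t, continuous f t.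
Proof.
  intros Hf t. apply filterlim_locally. intros eps.
  pose proof (Rabs_pos C) as HC. pose proof (Rle_abs C).
  assert (Hd : 0 < eps / (Rabs C + 1)) by (apply Rdiv_lt_0_compat; [apply cond_pos|lra]).
  exists (mkposreal _ Hd). intros y Hy.
  change (Rabs (y - t) < eps / (Rabs C + 1)) in Hy. change (Rabs (f y - f t) < eps).
  assert (E : eps / (Rabs C + 1) * (Rabs C + 1) = eps) by (field; lra).
  pose proof (Hf y t). pose proof (Rabs_pos (y - t)). pose proof (cond_pos eps). nra.
Qed.

Lemma is_lim_seq_scal_geom_half (C : R) : is_lim_seq (fun n => C * (/ 2) ^ n) 0.
Proof.
  replace (Finite 0) with (Rbar_mult C 0) by (simpl; f_equal; ring).
  apply is_lim_seq_scal_l, is_lim_seq_geom. rewrite Rabs_pos_eq; lra.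
Qed.

Lemma le_of_le_add_geometric (a b C : R) : (forall n, a <= b + C * (/ 2) ^ n) -> a <= b.
Proof.
  intros H.
  assert (Hlim := is_lim_seq_plus' _ _ b 0 (is_lim_seq_const b) (is_lim_seq_scal_geom_half C)).
  pose proof (is_lim_seq_le (fun _ => a) _ a _ H (is_lim_seq_const a) Hlim) as Hle.
  simpl in Hle. lra.
Qed.

Lemma Lim_seq_geometric_approx (u : nat -> R) (C : R) :
  (forall n, Rabs (u (S n) - u n) <= C * (/ 2) ^ n) ->
  forall n, Rabs (real (Lim_seq u) - u n) <= 2 * C * (/ 2) ^ n.
Proof.
  intros Hu.
  assert (HC : 0 <= C).
  { specialize (Hu 0%nat). pose proof (Rabs_pos (u 1%nat - u 0%nat)). simpl in Hu. lra. }
  assert (Htail : forall n m, (n <= m)%nat -> Rabs (u m - u n) <= 2 * C * (/ 2) ^ n).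
  { intros n m Hnm.
    enough (Rabs (u m - u n) <= 2 * C * (/ 2) ^ n - 2 * C * (/ 2) ^ m)
      by (pose proof (pow_le (/ 2) m ltac:(lra)); nra).
    induction Hnm as [|m Hnm IH].
    - rewrite Rminus_eq_0, Rabs_R0. lra.
    - replace (u (S m) - u n) with ((u (S m) - u m) + (u m - u n)) by ring.
      eapply Rle_trans; [apply Rabs_triang|]. specialize (Hu m). simpl. lra. }
  assert (Hcauchy : ex_lim_seq_cauchy u).
  { intros eps. destruct (proj2 (is_lim_seq_spec _ _) (is_lim_seq_scal_geom_half (4 * C)) eps)
      as [N HN].
    exists N. intros n m Hn Hm. specialize (HN N (le_n N)).
    pose proof (Htail N n Hn). pose proof (Htail N m Hm).
    pose proof (pow_le (/ 2) N ltac:(lra)).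
    rewrite Rminus_0_r, Rabs_pos_eq in HN by nra.
    replace (u n - u m) with ((u n - u N) - (u m - u N)) by ring.
    eapply Rle_lt_trans; [apply Rabs_triang|]. rewrite Rabs_Ropp. lra. }
  apply ex_lim_seq_cauchy_corr in Hcauchy. destruct Hcauchy as [l Hl].
  rewrite (is_lim_seq_unique _ _ Hl). intros n. simpl.
  assert (Hev : eventually (fun m => u n - 2 * C * (/ 2) ^ n <= u m <= u n + 2 * C * (/ 2) ^ n)).
  { exists n. intros m Hm. pose proof (proj1 (Rabs_le_between _ _) (Htail n m Hm)). lra. }
  apply Rabs_le_between. split.
  - pose proof (is_lim_seq_le_loc _ _ _ _ (filter_imp _ _ (fun m Hm => proj1 Hm) Hev)
                  (is_lim_seq_const (u n - 2 * C * (/ 2) ^ n)) Hl).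
    simpl in *. lra.
  - pose proof (is_lim_seq_le_loc _ _ _ _ (filter_imp _ _ (fun m Hm => proj2 Hm) Hev)
                  Hl (is_lim_seq_const (u n + 2 * C * (/ 2) ^ n))).
    simpl in *. lra.
Qed.

Lemma RInt_abs_le_const (g : R -> R) (a b M : R) : ex_RInt g a b ->
  (forall s, Rmin a b <= s <= Rmax a b -> Rabs (g s) <= M) ->
  Rabs (RInt g a b) <= Rabs (b - a) * M.
Proof.
  intros Hex Hb. apply (norm_RInt_le_const_abs g a b (RInt g a b) M); [exact Hb|].
  exact (RInt_correct (V := R_CompleteNormedModule) g a b Hex).
Qed.

Lemma Rmax_lipschitz (c a b : R) : Rabs (Rmax c a - Rmax c b) <= Rabs (a - b).
Proof.
  unfold Rmax. destruct (Rle_dec c a), (Rle_dec c b);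
    apply Rabs_le_between; pose proof (Rle_abs (a - b)); pose proof (Rle_abs (- (a - b)));
    rewrite Rabs_Ropp in *; lra.
Qed.

Section Picard.

Variables (J : nat -> Prop) (F : (nat -> R) -> nat -> R) (M L : R) (b0 : nat -> R).

Hypothesis M_nonneg : 0 <= M.
Hypothesis L_pos : 0 < L.
Hypothesis F_bounded : forall y i, J i -> Rabs (F y i) <= M.
Hypothesis F_lipschitz : forall y z d, (forall j, J j -> Rabs (y j - z j) <= d) ->
  forall i, J i -> Rabs (F y i - F z i) <= L * d.

Fixpoint picard (n : nat) : R -> nat -> R :=
  match n with
  | O => fun _ => b0
  | S n => fun t i => b0 i + RInt (fun s => F (picard n s) i) 0 t
  end.

Lemma F_comp_continuous (x : R -> nat -> R) (C : R) :
  (forall a b j, J j -> Rabs (x a j - x b j) <= C * Rabs (a - b)) ->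
  forall i t, J i -> continuous (fun s => F (x s) i) t.
Proof.
  intros Hx i t Hi. apply (lipschitz_continuous _ (L * C)). intros u v.
  rewrite Rmult_assoc. apply F_lipschitz; auto.
Qed.

Lemma ex_RInt_F_comp (x : R -> nat -> R) (C : R) :
  (forall a b j, J j -> Rabs (x a j - x b j) <= C * Rabs (a - b)) ->
  forall i a b, J i -> ex_RInt (fun s => F (x s) i) a b.
Proof.
  intros Hx i a b Hi. apply (ex_RInt_continuous (V := R_CompleteNormedModule)).
  intros t _. exact (F_comp_continuous x C Hx i t Hi).
Qed.

Lemma picard_lipschitz n a b i : J i ->
  Rabs (picard n a i - picard n b i) <= M * Rabs (a - b).
Proof.
  revert a b i. induction n as [|n IH]; intros a b i Hi; simpl.
  - rewrite Rminus_eq_0, Rabs_R0. pose proof (Rabs_pos (a - b)). nra.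
  - set (g := fun s => F (picard n s) i).
    assert (Hex : forall u v, ex_RInt g u v) by (intros; apply (ex_RInt_F_comp _ M IH); auto).
    replace (b0 i + RInt g 0 a - (b0 i + RInt g 0 b)) with (RInt g b a).
    + rewrite Rmult_comm. apply RInt_abs_le_const; [apply Hex|intros; apply F_bounded, Hi].
    + pose proof (RInt_Chasles (V := R_CompleteNormedModule) g 0 b a (Hex _ _) (Hex _ _)) as HC.
      change (RInt g 0 b + RInt g b a = RInt g 0 a) in HC. lra.
Qed.

Lemma picard_S n t i : picard (S n) t i = b0 i + RInt (fun s => F (picard n s) i) 0 t.
Proof. reflexivity. Qed.

(* The rate [2 L] makes integrating [L * picard_gap] against the previous step gain a factor 1/2. *)
Definition picard_gap (t : R) : R := M / (2 * L) * exp (2 * L * t).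

Lemma picard_step n t i : 0 <= t -> J i ->
  Rabs (picard (S n) t i - picard n t i) <= picard_gap t * (/ 2) ^ n.
Proof.
  unfold picard_gap. set (K := M / (2 * L)).
  assert (HK : K * (2 * L) = M) by (unfold K; field; lra).
  assert (HK0 : 0 <= K) by (unfold K; apply Rdiv_le_0_compat; lra).
  revert t i. induction n as [|n IH]; intros t i Ht Hi.
  - rewrite picard_S. simpl. rewrite Rplus_minus_l.
    eapply Rle_trans.
    { apply (RInt_abs_le_const _ 0 t M); [apply ex_RInt_const|intros; apply F_bounded, Hi]. }
    pose proof (exp_ineq1_le (2 * L * t)).
    rewrite Rminus_0_r, Rabs_pos_eq by lra. nra.
  - rewrite !picard_S, Rminus_plus_l_l.
    set (g1 := fun s => F (picard (S n) s) i).
    set (g0 := fun s => F (picard n s) i).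
    assert (Hdiff := is_RInt_minus (V := R_NormedModule) _ _ _ _ _ _
      (RInt_correct (V := R_CompleteNormedModule) _ _ _
         (ex_RInt_F_comp _ M (picard_lipschitz (S n)) i 0 t Hi))
      (RInt_correct (V := R_CompleteNormedModule) _ _ _
         (ex_RInt_F_comp _ M (picard_lipschitz n) i 0 t Hi))).
    set (P := fun s => K * exp (2 * L * s) * (/ 2) ^ n / 2).
    set (dP := fun s => L * (K * exp (2 * L * s) * (/ 2) ^ n)).
    assert (HP : is_RInt dP 0 t (minus (P t) (P 0))).
    { apply (is_RInt_derive (V := R_CompleteNormedModule)).
      - intros u _. unfold P, dP. auto_derive; [exact I|field].
      - intros u _. unfold dP. apply (ex_derive_continuous (K := R_AbsRing) (V := R_NormedModule)).
        auto_derive; exact I. }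
    change (Rabs (RInt g1 0 t - RInt g0 0 t)) with (norm (minus (RInt g1 0 t) (RInt g0 0 t))).
    eapply Rle_trans.
    { apply (norm_RInt_le (V := R_NormedModule) (fun u => minus (g1 u) (g0 u)) dP 0 t _ _ Ht);
        [|exact Hdiff|exact HP].
      intros u Hu. change (Rabs (g1 u - g0 u) <= dP u). unfold g1, g0, dP.
      apply F_lipschitz; [|exact Hi]. intros j Hj. apply IH; [lra|exact Hj]. }
    change (P t - P 0 <= K * exp (2 * L * t) * (/ 2) ^ S n). unfold P. simpl.
    pose proof (exp_pos (2 * L * 0)). pose proof (pow_le (/ 2) n ltac:(lra)).
    assert (0 <= K * exp (2 * L * 0) * (/ 2) ^ n)
      by (apply Rmult_le_pos; [apply Rmult_le_pos|]; lra).
    lra.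
Qed.

Lemma picard_gap_le t t0 : t <= t0 -> picard_gap t <= picard_gap t0.
Proof.
  intros Ht. unfold picard_gap. apply Rmult_le_compat_l.
  - apply Rdiv_le_0_compat; lra.
  - destruct (Rle_lt_or_eq_dec t t0 Ht) as [Hlt| ->]; [|lra].
    left. apply exp_increasing. nra.
Qed.

Definition picard_limit (t : R) (i : nat) : R := real (Lim_seq (fun n => picard n t i)).

Lemma picard_limit_approx t0 t i n : 0 <= t <= t0 -> J i ->
  Rabs (picard_limit t i - picard n t i) <= 2 * picard_gap t0 * (/ 2) ^ n.
Proof.
  intros Ht Hi. apply (Lim_seq_geometric_approx (fun n => picard n t i)). intros m.
  eapply Rle_trans; [apply picard_step; [lra|exact Hi]|].
  apply Rmult_le_compat_r; [apply pow_le; lra|apply picard_gap_le; lra].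
Qed.

Lemma picard_limit_lipschitz a b i : 0 <= a -> 0 <= b -> J i ->
  Rabs (picard_limit a i - picard_limit b i) <= M * Rabs (a - b).
Proof.
  intros Ha Hb Hi.
  apply (le_of_le_add_geometric _ _ (2 * picard_gap a + 2 * picard_gap b)). intros n.
  pose proof (picard_limit_approx a a i n ltac:(lra) Hi) as Hapx_a.
  pose proof (picard_limit_approx b b i n ltac:(lra) Hi) as Hapx_b.
  pose proof (picard_lipschitz n a b i Hi) as Hlip.
  replace (picard_limit a i - picard_limit b i) with
    ((picard_limit a i - picard n a i) + (picard n a i - picard n b i)
     - (picard_limit b i - picard n b i)) by ring.
  eapply Rle_trans; [apply Rabs_triang|]. rewrite Rabs_Ropp.
  eapply Rle_trans; [apply Rplus_le_compat_r, Rabs_triang|]. lra.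
Qed.

Definition picard_solution (t : R) (i : nat) : R := picard_limit (Rmax 0 t) i.

Lemma picard_solution_lipschitz a b i : J i ->
  Rabs (picard_solution a i - picard_solution b i) <= M * Rabs (a - b).
Proof.
  intros Hi. unfold picard_solution. eapply Rle_trans.
  - apply picard_limit_lipschitz; [apply Rmax_l|apply Rmax_l|exact Hi].
  - apply Rmult_le_compat_l; [exact M_nonneg|apply Rmax_lipschitz].
Qed.

Lemma picard_solution_integral t i : 0 <= t -> J i ->
  picard_solution t i = b0 i + RInt (fun s => F (picard_solution s) i) 0 t.
Proof.
  intros Ht Hi.
  set (g := fun s => F (picard_solution s) i).
  set (Q := picard_gap t).
  assert (HQ : 0 <= Q) by (unfold Q, picard_gap; pose proof (exp_pos (2 * L * t));
                           apply Rmult_le_pos; [apply Rdiv_le_0_compat|]; lra).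
  enough (Rabs (picard_solution t i - (b0 i + RInt g 0 t)) <= 0)
    by (pose proof (Rabs_pos (picard_solution t i - (b0 i + RInt g 0 t)));
        apply Rminus_diag_uniq, Rabs_eq_0; lra).
  apply (le_of_le_add_geometric _ _ (Q + t * L * (2 * Q))). intros n.
  set (gn := fun s => F (picard n s) i).
  assert (Hiter := picard_limit_approx t t i (S n) ltac:(lra) Hi).
  rewrite picard_S in Hiter. fold gn in Hiter.
  assert (Hint : Rabs (RInt gn 0 t - RInt g 0 t) <= Rabs (t - 0) * (L * (2 * Q * (/ 2) ^ n))).
  { apply (norm_RInt_le_const_abs (V := R_NormedModule) (fun s => minus (gn s) (g s)) 0 t).
    - intros s Hs. rewrite Rmin_left, Rmax_right in Hs by lra.
      change (Rabs (gn s - g s) <= L * (2 * Q * (/ 2) ^ n)). unfold gn, g.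
      apply F_lipschitz; [|exact Hi]. intros j Hj.
      unfold picard_solution. rewrite Rmax_right by lra.
      rewrite <- Rabs_Ropp, Ropp_minus_distr. apply picard_limit_approx; [lra|exact Hj].
    - apply (is_RInt_minus (V := R_NormedModule));
        apply (RInt_correct (V := R_CompleteNormedModule)).
      + exact (ex_RInt_F_comp _ M (picard_lipschitz n) i 0 t Hi).
      + exact (ex_RInt_F_comp _ M picard_solution_lipschitz i 0 t Hi). }
  rewrite Rminus_0_r, (Rabs_pos_eq t) in Hint by lra.
  unfold picard_solution at 1. rewrite Rmax_right by lra.
  replace (picard_limit t i - (b0 i + RInt g 0 t)) with
    ((picard_limit t i - (b0 i + RInt gn 0 t)) + (RInt gn 0 t - RInt g 0 t)) by ring.
  eapply Rle_trans; [apply Rabs_triang|].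
  simpl in Hiter. fold Q in Hiter. pose proof (pow_le (/ 2) n ltac:(lra)). nra.
Qed.

Lemma picard_solution_derive t i : 0 < t -> J i ->
  is_derive (fun s => picard_solution s i) t (F (picard_solution t) i).
Proof.
  intros Ht Hi.
  set (g := fun s => F (picard_solution s) i).
  assert (Hprim : is_derive (RInt g 0) t (g t)).
  { apply (is_derive_RInt (V := R_NormedModule) g (RInt g 0) 0 t).
    - apply filter_forall. intros u.
      exact (RInt_correct (V := R_CompleteNormedModule) _ _ _
               (ex_RInt_F_comp _ M picard_solution_lipschitz i 0 u Hi)).
    - exact (F_comp_continuous _ M picard_solution_lipschitz i t Hi). }
  apply (is_derive_ext_loc (fun s => b0 i + RInt g 0 s)).
  - exists (mkposreal t Ht). intros s Hs. change (Rabs (s - t) < t) in Hs.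
    apply Rabs_def2 in Hs. symmetry. apply picard_solution_integral; [lra|exact Hi].
  - replace (F (picard_solution t) i) with (plus zero (g t)) by apply plus_zero_l.
    exact (is_derive_plus (K := R_AbsRing) (V := R_NormedModule) (fun _ => b0 i) (RInt g 0) t
             zero (g t) (is_derive_const _ _) Hprim).
Qed.

Lemma picard_solution_init i : picard_solution 0 i = b0 i.
Proof.
  unfold picard_solution, picard_limit. rewrite Rmax_left by lra.
  rewrite (Lim_seq_ext _ (fun _ => b0 i)), Lim_seq_const; [reflexivity|].
  intros [|n]; [reflexivity|]. rewrite picard_S, RInt_point. apply Rplus_0_r.
Qed.

Theorem picard_global_solution : exists x : R -> nat -> R,
  (forall i, x 0 i = b0 i) /\
  (forall a b i, J i -> Rabs (x a i - x b i) <= M * Rabs (a - b)) /\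
  (forall t, 0 < t -> forall i, J i -> is_derive (fun s => x s i) t (F (x t) i)).
Proof.
  exists picard_solution. split; [|split].
  - exact picard_solution_init.
  - exact picard_solution_lipschitz.
  - intros t Ht i Hi. exact (picard_solution_derive t i Ht Hi).
Qed.

End Picard.

Lemma sigma_bounds k j : (j <= k)%nat -> 0 <= sigma k j <= INR k * INR k.
Proof.
  intros H. unfold sigma. pose proof (pos_INR j). pose proof (le_INR _ _ H). nra.
Qed.

Lemma sigma_ge_half k j : (1 <= j < k)%nat -> 1 / 2 <= sigma k j.
Proof.
  intros [H1 H2]. unfold sigma. apply le_INR in H1, H2. rewrite S_INR in H2. simpl in H1. nra.
Qed.

Lemma sigma_second_difference k j : sigma k j + sigma k (S (S j)) = 2 * sigma k (S j) - 1.
Proof. unfold sigma. rewrite !S_INR. field. Qed.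

Lemma bext_in k b i : (2 <= i <= k)%nat -> bext k b i = b i.
Proof.
  intros Hi. unfold bext.
  destruct (Nat.leb_spec 2 i), (Nat.leb_spec i k); simpl; auto; lia.
Qed.

Lemma bext_out k b i : ~ (2 <= i <= k)%nat -> bext k b i = 0.
Proof.
  intros Hi. unfold bext.
  destruct (Nat.leb_spec 2 i), (Nat.leb_spec i k); simpl; auto; lia.
Qed.

Lemma rhs_ext k y z i : (forall j, (2 <= j <= k)%nat -> y j = z j) -> (2 <= i <= k)%nat ->
  rhs k y i = rhs k z i.
Proof.
  intros Hyz Hi.
  assert (Hb : forall j, bext k y j = bext k z j).
  { intros j. destruct (classic (2 <= j <= k)%nat) as [Hj|Hj].
    - rewrite !bext_in by exact Hj. apply Hyz, Hj.
    - rewrite !bext_out by exact Hj. reflexivity. }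
  unfold rhs. rewrite (Hyz i Hi), !Hb. reflexivity.
Qed.

Definition K_lower (k : nat) (eta : R) (i : nat) : R := - sigma k (i - 1) + eta.

Lemma inK_iff_in_box k eta A y :
  inK k eta A y <-> in_box (fun j => (2 <= j <= k)%nat) (K_lower k eta) (fun _ => A) 0 y.
Proof.
  unfold inK, in_box, K_lower.
  split; intros H j Hj; specialize (H j Hj); lra.
Qed.

Lemma rhs_inward k eta A d y i : eta <= 1 / 2 -> 0 <= A -> 0 <= d < eta ->
  in_box (fun j => (2 <= j <= k)%nat) (K_lower k eta) (fun _ => A) d y -> (2 <= i <= k)%nat ->
  (y i = A + d -> rhs k y i <= 0) /\ (y i = K_lower k eta i - d -> 0 <= rhs k y i).
Proof.
  intros Heta HA Hd Hy Hi.
  assert (Hupper : forall j, bext k y j <= A + d).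
  { intros j. destruct (classic (2 <= j <= k)%nat) as [Hj|Hj].
    - rewrite bext_in by exact Hj. apply Hy, Hj.
    - rewrite bext_out by exact Hj. lra. }
  assert (Hlower : forall j, (j <= S k)%nat -> - sigma k (j - 1) - d <= bext k y j).
  { intros j Hjk. destruct (classic (2 <= j <= k)%nat) as [Hj|Hj].
    - rewrite bext_in by exact Hj. destruct (Hy j Hj). unfold K_lower in *. lra.
    - rewrite bext_out by exact Hj. destruct (sigma_bounds k (j - 1) ltac:(lia)). lra. }
  assert (Hfactor : 0 <= y i + sigma k (i - 1)) by (destruct (Hy i Hi); unfold K_lower in *; lra).
  unfold rhs. split; intros Hface.
  - pose proof (Hupper (i - 1)%nat). pose proof (Hupper (i + 1)%nat). rewrite Hface in *. nra.
  - pose proof (Hlower (i - 1)%nat ltac:(lia)). pose proof (Hlower (i + 1)%nat ltac:(lia)).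
    pose proof (sigma_second_difference k (i - 2)).
    replace (S (S (i - 2))) with (i + 1 - 1)%nat in * by lia.
    replace (S (i - 2)) with (i - 1)%nat in * by lia.
    replace (i - 2)%nat with (i - 1 - 1)%nat in * by lia.
    unfold K_lower in Hface. apply Rmult_le_pos; [exact Hfactor|lra].
Qed.

Lemma bext_abs_le k y j B : 0 <= B -> (forall j, (2 <= j <= k)%nat -> Rabs (y j) <= B) ->
  Rabs (bext k y j) <= B.
Proof.
  intros HB Hy. destruct (classic (2 <= j <= k)%nat) as [Hj|Hj].
  - rewrite bext_in by exact Hj. apply Hy, Hj.
  - rewrite bext_out, Rabs_R0 by exact Hj. exact HB.
Qed.

Lemma bext_sub k y z j : bext k y j - bext k z j = bext k (fun j => y j - z j) j.
Proof.
  destruct (classic (2 <= j <= k)%nat) as [Hj|Hj].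
  - rewrite !bext_in by exact Hj. reflexivity.
  - rewrite !bext_out by exact Hj. ring.
Qed.

Lemma rhs_abs_le k y i B : (forall j, (2 <= j <= k)%nat -> Rabs (y j) <= B) ->
  (2 <= i <= k)%nat -> 0 <= sigma k (i - 1) <= B -> Rabs (rhs k y i) <= 8 * B * B.
Proof.
  intros Hy Hi Hs. unfold rhs.
  assert (HB : 0 <= B) by lra.
  pose proof (bext_abs_le k y (i - 1) B HB Hy) as Hl.
  pose proof (bext_abs_le k y (i + 1) B HB Hy) as Hr.
  pose proof (Hy i Hi) as Hc.
  apply Rabs_le_between in Hl, Hr, Hc.
  rewrite Rabs_mult. replace (8 * B * B) with ((2 * B) * (4 * B)) by ring.
  apply Rmult_le_compat; try apply Rabs_pos; apply Rabs_le_between; lra.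
Qed.

Lemma rhs_lipschitz k y z i B d :
  (forall j, (2 <= j <= k)%nat -> Rabs (y j) <= B) ->
  (forall j, (2 <= j <= k)%nat -> Rabs (z j) <= B) ->
  (forall j, (2 <= j <= k)%nat -> Rabs (y j - z j) <= d) ->
  (2 <= i <= k)%nat -> 0 <= sigma k (i - 1) <= B ->
  Rabs (rhs k y i - rhs k z i) <= 12 * B * d.
Proof.
  intros Hy Hz Hyz Hi Hs. unfold rhs.
  assert (HB : 0 <= B) by lra.
  assert (Hd : 0 <= d) by (pose proof (Hyz i Hi); pose proof (Rabs_pos (y i - z i)); lra).
  set (u := bext k y (i - 1) - 2 * y i + bext k y (i + 1)).
  set (v := bext k z (i - 1) - 2 * z i + bext k z (i + 1)).
  assert (Hu : Rabs u <= 4 * B).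
  { pose proof (bext_abs_le k y (i - 1) B HB Hy) as Hl.
    pose proof (bext_abs_le k y (i + 1) B HB Hy) as Hr.
    pose proof (Hy i Hi) as Hc.
    apply Rabs_le_between in Hl, Hr, Hc. apply Rabs_le_between. unfold u. lra. }
  assert (Huv : Rabs (u - v) <= 4 * d).
  { pose proof (bext_abs_le k _ (i - 1) d Hd Hyz) as Hl.
    pose proof (bext_abs_le k _ (i + 1) d Hd Hyz) as Hr.
    pose proof (Hyz i Hi) as Hc. rewrite <- bext_sub in Hl, Hr.
    apply Rabs_le_between in Hl, Hr, Hc. apply Rabs_le_between. unfold u, v. lra. }
  assert (Hzs : Rabs (z i + sigma k (i - 1)) <= 2 * B).
  { pose proof (Hz i Hi) as Hc. apply Rabs_le_between in Hc. apply Rabs_le_between. lra. }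
  replace ((y i + sigma k (i - 1)) * u - (z i + sigma k (i - 1)) * v) with
    ((y i - z i) * u + (z i + sigma k (i - 1)) * (u - v)) by ring.
  eapply Rle_trans; [apply Rabs_triang|]. rewrite !Rabs_mult.
  assert (Rabs (y i - z i) * Rabs u <= d * (4 * B))
    by (apply Rmult_le_compat; auto using Rabs_pos).
  assert (Rabs (z i + sigma k (i - 1)) * Rabs (u - v) <= (2 * B) * (4 * d))
    by (apply Rmult_le_compat; auto using Rabs_pos).
  lra.
Qed.

Definition clamp (lo hi x : R) : R := Rmax lo (Rmin hi x).

Lemma clamp_range lo hi x : lo <= hi -> lo <= clamp lo hi x <= hi.
Proof. intros H. unfold clamp, Rmax, Rmin. destruct (Rle_dec hi x), (Rle_dec lo _); lra. Qed.

Lemma clamp_id lo hi x : lo <= x <= hi -> clamp lo hi x = x.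
Proof. intros H. unfold clamp, Rmax, Rmin. destruct (Rle_dec hi x), (Rle_dec lo _); lra. Qed.

Lemma clamp_of_ge lo hi x : lo <= hi -> hi <= x -> clamp lo hi x = hi.
Proof. intros H1 H2. unfold clamp, Rmax, Rmin. destruct (Rle_dec hi x), (Rle_dec lo _); lra. Qed.

Lemma clamp_of_le lo hi x : lo <= hi -> x <= lo -> clamp lo hi x = lo.
Proof. intros H1 H2. unfold clamp, Rmax, Rmin. destruct (Rle_dec hi x), (Rle_dec lo _); lra. Qed.

Lemma clamp_lipschitz lo hi x y : Rabs (clamp lo hi x - clamp lo hi y) <= Rabs (x - y).
Proof.
  unfold clamp. eapply Rle_trans; [apply Rmax_lipschitz|].
  unfold Rmin. destruct (Rle_dec hi x), (Rle_dec hi y);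
    apply Rabs_le_between; pose proof (Rle_abs (x - y)); pose proof (Rle_abs (- (x - y)));
    rewrite Rabs_Ropp in *; lra.
Qed.

Definition clamped_rhs (k : nat) (eta A : R) (y : nat -> R) (i : nat) : R :=
  rhs k (fun j => clamp (K_lower k eta j) A (y j)) i.

Section SystemOnK.

Variables (k : nat) (eta A : R).
Hypothesis eta_range : 0 < eta <= 1 / 2.
Hypothesis A_nonneg : 0 <= A.

Let B := A + INR k * INR k + 1.

Lemma K_lower_range j : (2 <= j <= k)%nat -> - (INR k * INR k) <= K_lower k eta j <= A.
Proof.
  intros Hj. unfold K_lower.
  pose proof (sigma_ge_half k (j - 1) ltac:(lia)). pose proof (sigma_bounds k (j - 1) ltac:(lia)).
  lra.
Qed.

Lemma clamp_K_abs_le y j : (2 <= j <= k)%nat -> Rabs (clamp (K_lower k eta j) A (y j)) <= B.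
Proof.
  intros Hj. pose proof (K_lower_range j Hj).
  pose proof (clamp_range (K_lower k eta j) A (y j) ltac:(lra)).
  pose proof (pos_INR k). apply Rabs_le_between. unfold B. nra.
Qed.

Lemma sigma_le_B i : (2 <= i <= k)%nat -> 0 <= sigma k (i - 1) <= B.
Proof. intros Hi. pose proof (sigma_bounds k (i - 1) ltac:(lia)). unfold B. lra. Qed.

Lemma clamped_rhs_abs_le y i : (2 <= i <= k)%nat -> Rabs (clamped_rhs k eta A y i) <= 8 * B * B.
Proof.
  intros Hi. apply rhs_abs_le; [intros; apply clamp_K_abs_le; auto|exact Hi|apply sigma_le_B, Hi].
Qed.

Lemma clamped_rhs_lipschitz y z d : (forall j, (2 <= j <= k)%nat -> Rabs (y j - z j) <= d) ->
  forall i, (2 <= i <= k)%nat ->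
  Rabs (clamped_rhs k eta A y i - clamped_rhs k eta A z i) <= 12 * B * d.
Proof.
  intros Hyz i Hi.
  apply rhs_lipschitz; [intros; apply clamp_K_abs_le; auto|intros; apply clamp_K_abs_le; auto| |
                        exact Hi|apply sigma_le_B, Hi].
  intros j Hj. eapply Rle_trans; [apply clamp_lipschitz|apply Hyz, Hj].
Qed.

Lemma clamped_rhs_inward d y i : 0 <= d -> (2 <= i <= k)%nat ->
  (y i = A + d -> clamped_rhs k eta A y i <= 0) /\
  (y i = K_lower k eta i - d -> 0 <= clamped_rhs k eta A y i).
Proof.
  intros Hd Hi. pose proof (K_lower_range i Hi).
  assert (Hbox : in_box (fun j => (2 <= j <= k)%nat) (K_lower k eta) (fun _ => A) 0
                   (fun j => clamp (K_lower k eta j) A (y j))).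
  { intros j Hj. pose proof (K_lower_range j Hj).
    pose proof (clamp_range (K_lower k eta j) A (y j) ltac:(lra)). lra. }
  destruct (rhs_inward k eta A 0 _ i ltac:(lra) A_nonneg ltac:(lra) Hbox Hi) as [Hup Hlo].
  unfold clamped_rhs. split; intros Hface.
  - apply Hup. rewrite clamp_of_ge; lra.
  - apply Hlo. rewrite clamp_of_le; lra.
Qed.

Lemma clamped_rhs_eq_rhs y i : inK k eta A y -> (2 <= i <= k)%nat ->
  clamped_rhs k eta A y i = rhs k y i.
Proof.
  intros Hy Hi. apply rhs_ext; [|exact Hi].
  intros j Hj. apply clamp_id. specialize (Hy j Hj). unfold K_lower. lra.
Qed.

Lemma K_forward_invariant (T : Rbar) (b : R -> nat -> R) :
  is_solution k T b -> inK k eta A (b 0) ->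
  forall t, 0 <= t -> Rbar_lt t T -> inK k eta A (b t).
Proof.
  intros [Hb0 Hb] Hin t Ht HtT. apply inK_iff_in_box.
  apply (box_invariant (fun j => (2 <= j <= k)%nat) k (K_lower k eta) (fun _ => A) (rhs k) eta T b);
    auto; [tauto|lra| |].
  - intros d y i Hd Hy Hi. apply rhs_inward; auto; lra.
  - apply inK_iff_in_box, Hin.
Qed.

Lemma K_global_solution (b0 : nat -> R) : inK k eta A b0 ->
  exists b : R -> nat -> R,
    (forall i, (2 <= i <= k)%nat -> b 0 i = b0 i) /\ is_solution k p_infty b.
Proof.
  intros Hin.
  assert (HB : 0 < B) by (pose proof (pos_INR k); unfold B; nra).
  destruct (picard_global_solution (fun j => (2 <= j <= k)%nat) (clamped_rhs k eta A)
              (8 * B * B) (12 * B) b0) as [x [Hx0 [Hxlip Hxder]]];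
    [nra|lra|exact clamped_rhs_abs_le|exact clamped_rhs_lipschitz|].
  assert (Hright : forall i, (2 <= i <= k)%nat ->
                     filterlim (fun s => x s i) (at_right 0) (locally (x 0 i))).
  { intros i Hi.
    apply (filterlim_filter_le_1 (fun s => x s i) (filter_le_within (F := locally 0) _)).
    apply (lipschitz_continuous (fun s => x s i) (8 * B * B)). intros a c. apply Hxlip, Hi. }
  assert (Hxin : forall t, 0 <= t -> inK k eta A (x t)).
  { intros t Ht. apply inK_iff_in_box.
    apply (box_invariant (fun j => (2 <= j <= k)%nat) k (K_lower k eta) (fun _ => A)
             (clamped_rhs k eta A) 1 p_infty x); auto; [tauto|lra| | |exact I].
    - intros d y i Hd _ Hi. apply clamped_rhs_inward; auto; lra.
    - apply inK_iff_in_box. intros i Hi. rewrite Hx0. apply Hin, Hi. }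
  exists x. split; [intros i _; apply Hx0|split; [exact Hright|]].
  intros t Ht _ i Hi. rewrite <- clamped_rhs_eq_rhs; [|apply Hxin; lra|exact Hi].
  apply Hxder; auto.
Qed.

End SystemOnK.

Theorem proposition2p3 :
  forall (k : nat) (eta A : R),
    (2 <= k)%nat -> 0 < eta <= 1 / 5 -> 0 <= A ->
    (forall (T : Rbar) (b : R -> nat -> R),
        Rbar_lt 0 T -> is_solution k T b -> inK k eta A (b 0) ->
        forall t : R, 0 <= t -> Rbar_lt t T -> inK k eta A (b t)) /\
    (forall b0 : nat -> R, inK k eta A b0 ->
        exists b : R -> nat -> R,
          (forall i : nat, (2 <= i <= k)%nat -> b 0 i = b0 i) /\
          is_solution k p_infty b).
Proof.
  intros k eta A _ Heta HA.
  assert (Heta2 : 0 < eta <= 1 / 2) by lra.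
  split.
  - intros T b _. exact (K_forward_invariant k eta A Heta2 HA T b).
  - exact (K_global_solution k eta A Heta2 HA).
Qed.
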